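(* Let $\mathbb{K}$ be a field of characteristic zero, $p,q\in\mathbb{Z}^n_{\ge0}$ and $\beta,\gamma\in\mathbb{K}^n$. For any integer $d\ge1$, $$(\mathrm{ad}\,\Delta^q_\gamma)^d(\Delta^p_\beta)=s_d\,\Delta^{p+dq}_{\omega_d},$$ where $s_1=1$, $s_d=\prod_{i=0}^{d-2}\langle\gamma,p+iq\rangle$ for $d>1$, and $\omega_d=\langle\gamma,p+(d-1)q\rangle\beta-d\langle\beta,q\rangle\gamma$.
   Context: For $p\in\mathbb{Z}^n_{\ge0}$ and $\beta\in\mathbb{K}^n$, $\Delta^p_\beta:=x_1^{p_1}\cdots x_n^{p_n}\sum_{j=1}^n\beta_jx_j\partial_j$ (a derivation of $\mathbb{K}[x_1,\ldots,x_n]$, $\partial_j=\partial/\partial x_j$). $\langle\beta,u\rangle:=\sum_i\beta_iu_i$. $(\mathrm{ad}\,X)(Y)=[X,Y]=X\circ Y-Y\circ X$. *)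

From HB Require Import structures.
From mathcomp Require Import all_boot all_order all_algebra.
From mathcomp Require Import mpoly.
Set Implicit Arguments. Unset Strict Implicit. Unset Printing Implicit Defensive.
Import GRing.Theory.
Local Open Scope ring_scope.

Definition pairing (K : fieldType) (n : nat) (beta : 'I_n -> K) (u : 'I_n -> nat) : K :=
  \sum_(i < n) beta i * (u i)%:R.

Definition xmon (K : fieldType) (n : nat) (p : 'I_n -> nat) : {mpoly K[n]} :=
  \prod_(i < n) 'X_i ^+ p i.

Definition Delta (K : fieldType) (n : nat) (p : 'I_n -> nat) (beta : 'I_n -> K)
  (f : {mpoly K[n]}) : {mpoly K[n]} :=
  xmon K p * \sum_(j < n) (beta j *: ('X_j * mderiv j f)).

Definition ad (K : fieldType) (n : nat) (X Y : {mpoly K[n]} -> {mpoly K[n]}) :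
  {mpoly K[n]} -> {mpoly K[n]} := fun f => X (Y f) - Y (X f).

Definition mi_add (n : nat) (p q : 'I_n -> nat) : 'I_n -> nat := fun i => (p i + q i)%N.
Definition mi_scale (n : nat) (d : nat) (q : 'I_n -> nat) : 'I_n -> nat := fun i => (d * q i)%N.

From HB Require Import structures.
From mathcomp Require Import all_boot all_order all_algebra.
From mathcomp Require Import mpoly.
From mathcomp Require Import ring.
Import GRing.Theory.
Local Open Scope ring_scope.

(* Write Delta^p_beta = x^p E_beta with E_beta = sum_j beta_j x_j d_j.  The
   Euler-type operator E_beta is diagonal on monomials, E_beta x^m = <beta,m> x^m,
   so on a monomial both composites of Delta^q_gamma and Delta^p_beta land on
   x^(p+q+m), and their difference gives
     [Delta^q_gamma, Delta^p_beta] = Delta^(p+q)_(<gamma,p> beta - <beta,q> gamma).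
   Iterating, (ad Delta^q_gamma)^d (Delta^p_beta) stays in the family Delta, and
   the coefficients s_d, omega_d satisfy the recursion of this commutator rule,
   which is checked by a ring identity. *)

Section DeltaCommutator.
Variables (K : fieldType) (n : nat).
Implicit Types (p q : 'I_n -> nat) (beta gamma : 'I_n -> K) (f : {mpoly K[n]}).

Definition mnm_of p : 'X_{1..n} := [multinom p i | i < n].

Lemma mnm_of_add p q : mnm_of (mi_add p q) = (mnm_of p + mnm_of q)%MM.
Proof. by apply/mnmP => i; rewrite mnmDE !mnmE. Qed.

Lemma xmonE p : xmon K p = 'X_[mnm_of p].
Proof. by rewrite mpolyXE_id; apply: eq_bigr => i _; rewrite mnmE. Qed.

Lemma pairingD beta (u v : 'I_n -> nat) :
  pairing beta (mi_add u v) = pairing beta u + pairing beta v.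
Proof. by rewrite /pairing -big_split; apply: eq_bigr => i _; rewrite natrD mulrDr. Qed.

Lemma pairing_scale beta k q :
  pairing beta (mi_scale k q) = k%:R * pairing beta q.
Proof.
rewrite /pairing big_distrr; apply: eq_bigr => i _.
by rewrite natrM mulrCA.
Qed.

Lemma pairing_mnmD beta p (m : 'X_{1..n}) :
  pairing beta (fun i => (mnm_of p + m)%MM i)
  = pairing beta p + pairing beta (fun i => m i).
Proof. by rewrite -pairingD; apply: eq_bigr => i _; rewrite mnmDE mnmE. Qed.

Lemma pairing_lincomb a b beta gamma (u : 'I_n -> nat) :
  pairing (fun j => a * beta j - b * gamma j) u
  = a * pairing beta u - b * pairing gamma u.
Proof.
rewrite /pairing !big_distrr -sumrB; apply: eq_bigr => i _.
by rewrite mulrBl -!mulrA.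
Qed.

Lemma X_mderivX j (m : 'X_{1..n}) :
  'X_j * mderiv j ('X_[m] : {mpoly K[n]}) = (m j)%:R *: 'X_[m].
Proof.
rewrite mderivX -scalerAr.
have [->|mj_gt0] := posnP (m j); first by rewrite !scale0r.
by rewrite -mpolyXD addmC submK // lep1mP -lt0n.
Qed.

Lemma Delta_X p beta (m : 'X_{1..n}) :
  Delta p beta 'X_[m] = pairing beta (fun i => m i) *: 'X_[mnm_of p + m].
Proof.
rewrite /Delta xmonE mpolyXD scalerAr /pairing scaler_suml.
by congr (_ * _); apply: eq_bigr => j _; rewrite X_mderivX scalerA.
Qed.

Lemma Delta_linear p beta c f g :
  Delta p beta (c *: f + g) = c *: Delta p beta f + Delta p beta g.
Proof.
rewrite /Delta scalerAr -mulrDr scaler_sumr -big_split; congr (_ * _).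
apply: eq_bigr => j _ /=.
by rewrite mderivD mderivZ mulrDr -scalerAr !scalerDr !scalerA mulrC.
Qed.

Lemma Delta0 p beta : Delta p beta 0 = 0.
Proof. by rewrite /Delta big1 ?mulr0 // => j _; rewrite mderiv0 mulr0 scaler0. Qed.

Lemma DeltaZ p beta c f : Delta p beta (c *: f) = c *: Delta p beta f.
Proof. by rewrite -[c *: f]addr0 Delta_linear Delta0 !addr0. Qed.

Lemma eq_Delta p p' beta beta' c f :
  p =1 p' -> beta =1 (fun j => c * beta' j) ->
  Delta p beta f = c *: Delta p' beta' f.
Proof.
move=> eq_p eq_beta; rewrite /Delta scalerAr scaler_sumr; congr (_ * _).
  by apply: eq_bigr => i _; rewrite eq_p.
by apply: eq_bigr => j _; rewrite eq_beta scalerA.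
Qed.

Lemma ad_Delta_X p q beta gamma (m : 'X_{1..n}) :
  ad (Delta q gamma) (Delta p beta) 'X_[m]
  = Delta (mi_add p q)
      (fun j => pairing gamma p * beta j - pairing beta q * gamma j) 'X_[m].
Proof.
rewrite /ad !Delta_X !DeltaZ !Delta_X !scalerA mnm_of_add !addmA.
rewrite [(mnm_of q + mnm_of p)%MM]addmC -scalerBl; congr (_ *: _).
by rewrite !pairing_mnmD pairing_lincomb; ring.
Qed.

Lemma ad_Delta p q beta gamma f :
  ad (Delta q gamma) (Delta p beta) f
  = Delta (mi_add p q)
      (fun j => pairing gamma p * beta j - pairing beta q * gamma j) f.
Proof.
elim/mpolyind: f => [|c m f _ _ IH]; first by rewrite /ad !Delta0 subrr.
rewrite /ad !Delta_linear -IH -ad_Delta_X /ad.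
by rewrite scalerBr addrACA opprD.
Qed.

End DeltaCommutator.

Theorem lemma8 (K : fieldType) (n : nat) (charK0 : [pchar K] =i pred0)
  (p q : 'I_n -> nat) (beta gamma : 'I_n -> K) (d : nat) (hd : (1 <= d)%N) :
  let s_d : K := \prod_(i < d.-1) pairing gamma (mi_add p (mi_scale i q)) in
  let omega_d : 'I_n -> K := fun j =>
    pairing gamma (mi_add p (mi_scale d.-1 q)) * beta j
    - d%:R * pairing beta q * gamma j in
  forall f : {mpoly K[n]},
    iter d (ad (Delta q gamma)) (Delta p beta) f
    = s_d *: Delta (mi_add p (mi_scale d q)) omega_d f.
Proof.
move=> s_d omega_d; rewrite {}/s_d {}/omega_d.
case: d hd => // d _ /=.
elim: d => [|d IH] f.
  rewrite /= ad_Delta big_ord0; apply: eq_Delta => [i|j].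
    by rewrite /mi_add /mi_scale mul1n.
  by rewrite pairingD pairing_scale mul0r addr0 !mul1r.
rewrite {1}/ad /= !IH DeltaZ -scalerBr -/(ad _ _ f) ad_Delta.
rewrite big_ord_recr /= -scalerA; congr (_ *: _).
apply: eq_Delta => [i|j].
  by rewrite /mi_add /mi_scale -addnA -mulSnr.
by rewrite pairing_lincomb !pairingD !pairing_scale; ring.
Qed.
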